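(* Let $d,n\ge 1$, $\lambda>0$, $0<\kappa\le 1$, and let $u\in H^{2}_{\mathrm{mix}}$ on $[0,1]^d$ satisfy the standing facts below. Let $I_n:=\{i\in\mathbb{N}^d:\|i\|_1\le n\}$ and let $u_i$ ($i\in I_n$) be the piecewise $d$-linear interpolant of $u$ on the grid $\Omega_i$. Let $t_n\ge 0$ and for each $i$ with $\|i\|_1=n$ let $t_i\in[0,t_n]$. Let $(U_i)_{i\in I_n}$ be $\{0,1\}$-valued random variables with $U_i=0$ almost surely if $\|i\|_1<n$ and $\Pr(U_i=1)=G(t_i)$ if $\|i\|_1=n$, where $G(t)=\frac{1}{\lambda\Gamma(1+1/\kappa)}\int_0^t e^{-(x/\lambda)^\kappa}dx$. Let $I'=\{i\in I_n: U_i=0\}$ (a random set) and let $u^{\mathrm{gcp}}_{I'}=\sum_{i\in I'}c_iu_i$, where $(c_i)_{i\in I'}$ is the (unique) solution of the general coefficient problem for $I'$. Then $$\mathbb{E}\left[\|u-u^{\mathrm{gcp}}_{I'}\|_{2}\right]\le \epsilon_n\left(1+3\left(1-e^{-(t_n/\lambda)^{\kappa}}\right)\right).$$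
   Context: Notation: for $i\in\mathbb{N}$, $\Omega_i=\{k2^{-i}:k=0,\dots,2^i\}$; for $i\in\mathbb{N}^d$, $\Omega_i=\Omega_{i_1}\times\cdots\times\Omega_{i_d}\subset[0,1]^d$. For multi-indices, $i\le j$ means $i_k\le j_k$ for all $k$, $\|i\|_1=\sum_k i_k$, and $I{\downarrow}:=\{i:\exists j\in I,\ i\le j\}$. $\|\cdot\|_2$ is the $L^2([0,1]^d)$ norm. Hierarchical surpluses: for $j\in\mathbb{N}^d$, $h_j:=\sum_{S\subseteq\{1,\dots,d\}}(-1)^{|S|}u_{j-e_S}$, where $e_S=\sum_{k\in S}e^k$ ($e^k$ the $k$-th unit multi-index) and $u_m:=0$ if some $m_k<0$; so $u_i=\sum_{j\le i}h_j$. Seminorm: $|u|_{H^2_{\mathrm{mix}}}:=\left\|\frac{\partial^{2d}u}{\partial x_1^2\cdots\partial x_d^2}\right\|_2$. Standing facts (taken as given for $u\in H^2_{\mathrm{mix}}$): $u=\sum_{j\in\mathbb{N}^d}h_j$ with convergence in $L^2$, and $\|h_j\|_2\le 3^{-d}4^{-\|j\|_1}|u|_{H^2_{\mathrm{mix}}}$ for all $j$. Define $$\epsilon_n:=\tfrac13\,3^{-d}\,2^{-2n}\,|u|_{H^2_{\mathrm{mix}}}\sum_{k=0}^{d-1}\binom{n+d}{k}\left(\tfrac13\right)^{d-1-k},$$ which equals $3^{-d}|u|_{H^2_{\mathrm{mix}}}\sum_{k=n+1}^{\infty}4^{-k}\binom{k+d-1}{d-1}$. General coefficient problem (GCP) for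 a finite $I\subset\mathbb{N}^d$: for real $(c_i)_{i\in I}$ set $w_i:=\sum_{j\in I,\,j\ge i}c_j$ for $i\in I{\downarrow}$; among all families with $w_i\in\{0,1\}$ for all $i\in I{\downarrow}$, maximise $Q'(w)=\sum_{i\in I{\downarrow}}4^{-\|i\|_1}w_i$. (Here $I'$ is always a downset, for which the GCP solution is unique with $w_i=1$ on $I'$.) $G$ is the random-incidence distribution function of a Weibull renewal process with scale $\lambda$ and shape $\kappa$, modelling the probability that the computation of $u_i$ (taking time $t_i$ on one node) is interrupted by a fault; solutions with $\|i\|_1<n$ are recomputed on failure and hence always available. *)

From Stdlib Require Import Reals List Arith.
Import ListNotations.
Open Scope R_scope.

(** Multi-indices in N^d are lists of naturals of length d. *)
Definition mi := list nat.

(** Real-valued functions on R^d (points are coordinate maps nat -> R;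
    coordinate k, for k < d). *)
Definition Fun := (nat -> R) -> R.

Definition sumR {A : Type} (l : list A) (f : A -> R) : R :=
  fold_right (fun a acc => f a + acc) 0 l.

Definition norm1 (i : mi) : nat := fold_right Nat.add 0%nat i.

Fixpoint mi_leb (i j : mi) : bool :=
  match i, j with
  | [], [] => true
  | a :: r, b :: s => Nat.leb a b && mi_leb r s
  | _, _ => false
  end.

Fixpoint enum_mi (d n : nat) : list mi :=
  match d with
  | O => [[]]
  | S d' => flat_map (fun a => map (cons a) (enum_mi d' (n - a))) (seq 0 (S n))
  end.

Fixpoint box (j : mi) : list mi :=
  match j with
  | [] => [[]]
  | a :: r => flat_map (fun b => map (cons b) (box r)) (seq 0 (S a))
  end.

Definition downset (I : list mi) : list mi :=
  nodup (list_eq_dec Nat.eq_dec) (flat_map box I).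

Definition wcoef (I : list mi) (c : mi -> R) (i : mi) : R :=
  sumR I (fun j => if mi_leb i j then c j else 0).

Definition Qp (I : list mi) (c : mi -> R) : R :=
  sumR (downset I) (fun i => (/4) ^ norm1 i * wcoef I c i).

Definition gcp_admissible (I : list mi) (c : mi -> R) : Prop :=
  forall i, In i (downset I) -> wcoef I c i = 0 \/ wcoef I c i = 1.

Definition is_gcp_solution (I : list mi) (c : mi -> R) : Prop :=
  gcp_admissible I c /\
  forall c' : mi -> R, gcp_admissible I c' -> Qp I c' <= Qp I c.

Fixpoint grid (i : mi) : list mi :=
  match i with
  | [] => [[]]
  | a :: r => flat_map (fun m => map (cons m) (grid r)) (seq 0 (S (2 ^ a)))
  end.

Definition grid_pt (i m : mi) : nat -> R :=
  fun k => INR (nth k m 0%nat) / 2 ^ (nth k i 0%nat).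

Definition hat (l m : nat) (t : R) : R := Rmax 0 (1 - Rabs (2 ^ l * t - INR m)).

Fixpoint hatprod (k : nat) (i m : mi) (x : nat -> R) : R :=
  match i, m with
  | a :: r, b :: s => hat a b (x k) * hatprod (S k) r s x
  | _, _ => 1
  end.

Definition interp (u : Fun) (i : mi) : Fun :=
  fun x => sumR (grid i) (fun m => u (grid_pt i m) * hatprod 0 i m x).

Fixpoint sub_idx (j : mi) (s : list bool) : option mi :=
  match j, s with
  | [], [] => Some []
  | a :: r, b :: t =>
      if b then match a with
                | O => None
                | S a' => option_map (cons a') (sub_idx r t)
                end
      else option_map (cons a) (sub_idx r t)
  | _, _ => None
  end.

Fixpoint bvecs (n : nat) : list (list bool) :=
  match n with
  | O => [[]]
  | S n' => flat_map (fun b => map (cons b) (bvecs n')) [false; true]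
  end.

(** hierarchical surplus h_j = sum_S (-1)^{|S|} u_{j - e_S}, u_m := 0 if m has a
    negative component *)
Definition hsur (U : mi -> Fun) (j : mi) : Fun :=
  fun x => sumR (bvecs (length j))
    (fun s => match sub_idx j s with
              | Some m => (-1) ^ (count_occ Bool.bool_dec s true) * U m x
              | None => 0
              end).

(** real power x^a for x >= 0, a > 0 (with 0^a = 0) *)
Definition rpow (x a : R) : R := if Rlt_dec 0 x then Rpower x a else 0.

Definition is_RInt (f : R -> R) (a b v : R) : Prop :=
  exists pr : Riemann_integrable f a b, RiemannInt pr = v.

Definition is_Gamma (z g : R) : Prop :=
  forall eps, 0 < eps -> exists M, forall T, M <= T ->
    exists v, is_RInt (fun x => rpow x (z - 1) * exp (- x)) 0 T v /\ Rabs (v - g) < eps.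

Definition weibull_G (lam kap t g : R) : Prop :=
  exists Gam w, is_Gamma (1 + / kap) Gam /\
    is_RInt (fun x => exp (- rpow (x / lam) kap)) 0 t w /\ g = w / (lam * Gam).

Definition eps_n (d n : nat) (s : R) : R :=
  / 3 * (/ 3) ^ d * (/ 4) ^ n * s *
  sum_f_R0 (fun k => C (n + d) k * (/ 3) ^ (d - 1 - k)) (d - 1).

(** I' = {i in I_n : U_i = 0} for an outcome a of (U_i) *)
Definition Iprime (d n : nat) (a : mi -> bool) : list mi :=
  filter (fun i => negb (a i)) (enum_mi d n).

Definition comb (u : Fun) (I : list mi) (c : mi -> R) : Fun :=
  fun x => sumR I (fun i => c i * interp u i x).

(** probability that U_i = 1 under a finite joint law *)
Definition prob1 (om : list (R * (mi -> bool))) (i : mi) : R :=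
  sumR om (fun pa => if snd pa i then fst pa else 0).

(* For an outcome of the faults, [I'] is a downset, because indices below level [n]
   never fail.  On a downset the solution of the general coefficient problem has
   [w_i = 1] everywhere (the weights [4^-|i|] are positive and the triangular system
   [w = 1] is solvable), so the combination is exactly the sum of the hierarchical
   surpluses over [I'].  The error is then bounded by the surpluses outside [I']: those
   above level [n], whose bounds add up to [eps_n], and the failed ones of level [n].
   A level-[n] index fails with probability [G(t_i)]; the [C(n+d-1, d-1)] surplus bounds
   [3^-d 4^-n |u|] of that level add up to at most [3 eps_n].  Finally, for [kap <= 1]
   the Weibull survival function [S] is supermultiplicative ([x^kap] is subadditive),
   so [int_0^t S + S(t) int_0^X S <= int_0^(t+X) S]; letting [X -> oo], with
   [int_0^oo S = lam Gamma(1 + 1/kap)], gives [G(t) <= 1 - S(t) <= 1 - S(t_n)]. *)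

From Stdlib Require Import Reals List Arith Lia Lra Permutation FunctionalExtensionality Bool.
From Coquelicot Require Coquelicot.
Import ListNotations.
Open Scope R_scope.

(** * Finite sums *)

Lemma sumR_app {A} (l1 l2 : list A) f : sumR (l1 ++ l2) f = sumR l1 f + sumR l2 f.
Proof. induction l1 as [|a l1 IH]; simpl; [ring | rewrite IH; ring]. Qed.

Lemma sumR_map {A B} (g : A -> B) l f : sumR (map g l) f = sumR l (fun x => f (g x)).
Proof. induction l as [|a l IH]; simpl; [ring | rewrite IH; ring]. Qed.

Lemma sumR_flat_map {A B} (g : A -> list B) l f :
  sumR (flat_map g l) f = sumR l (fun x => sumR (g x) f).
Proof. induction l as [|a l IH]; simpl; [ring | rewrite sumR_app, IH; ring]. Qed.

Lemma sumR_ext_in {A} (l : list A) f g :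
  (forall x, In x l -> f x = g x) -> sumR l f = sumR l g.
Proof.
  induction l as [|a l IH]; simpl; intros H; [ring|].
  rewrite H, IH; auto.
Qed.

Lemma sumR_ext {A} (l : list A) f g : (forall x, f x = g x) -> sumR l f = sumR l g.
Proof. intros H; apply sumR_ext_in; auto. Qed.

Lemma sumR_plus {A} (l : list A) f g :
  sumR l (fun x => f x + g x) = sumR l f + sumR l g.
Proof. induction l as [|a l IH]; simpl; [ring | rewrite IH; ring]. Qed.

Lemma sumR_minus {A} (l : list A) f g :
  sumR l (fun x => f x - g x) = sumR l f - sumR l g.
Proof. induction l as [|a l IH]; simpl; [ring | rewrite IH; ring]. Qed.

Lemma sumR_opp {A} (l : list A) f : sumR l (fun x => - f x) = - sumR l f.
Proof. induction l as [|a l IH]; simpl; [ring | rewrite IH; ring]. Qed.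

Lemma sumR_scal {A} (l : list A) c f : sumR l (fun x => c * f x) = c * sumR l f.
Proof. induction l as [|a l IH]; simpl; [ring | rewrite IH; ring]. Qed.

Lemma sumR_zero {A} (l : list A) : sumR l (fun _ => 0) = 0.
Proof. induction l as [|a l IH]; simpl; [ring | rewrite IH; ring]. Qed.

Lemma sumR_le {A} (l : list A) f g :
  (forall x, In x l -> f x <= g x) -> sumR l f <= sumR l g.
Proof.
  induction l as [|a l IH]; simpl; intros H; [lra|].
  pose proof (H a (or_introl eq_refl)).
  pose proof (IH (fun x Hx => H x (or_intror Hx))). lra.
Qed.

Lemma sumR_nonneg {A} (l : list A) f : (forall x, In x l -> 0 <= f x) -> 0 <= sumR l f.
Proof. intros H. rewrite <- (sumR_zero l). apply sumR_le; auto. Qed.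

Lemma sumR_nonneg_eq0 {A} (l : list A) f :
  (forall x, In x l -> 0 <= f x) -> sumR l f <= 0 -> forall x, In x l -> f x = 0.
Proof.
  induction l as [|a l IH]; simpl; intros Hf Hs x Hx; [contradiction|].
  assert (0 <= sumR l f) by (apply sumR_nonneg; auto).
  assert (0 <= f a) by auto.
  destruct Hx as [<-|Hx]; [lra|]. apply IH; auto. lra.
Qed.

Lemma sumR_swap {A B} (l1 : list A) (l2 : list B) F :
  sumR l1 (fun a => sumR l2 (fun b => F a b)) = sumR l2 (fun b => sumR l1 (fun a => F a b)).
Proof.
  induction l1 as [|a l1 IH]; simpl; [rewrite sumR_zero; ring|].
  rewrite IH, <- sumR_plus. reflexivity.
Qed.

Lemma sumR_filter {A} (P : A -> bool) l f :
  sumR (filter P l) f = sumR l (fun x => if P x then f x else 0).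
Proof. induction l as [|a l IH]; simpl; [ring|]. destruct (P a); simpl; rewrite IH; ring. Qed.

Lemma sumR_perm {A} (l1 l2 : list A) f : Permutation l1 l2 -> sumR l1 f = sumR l2 f.
Proof. induction 1; simpl; try ring; congruence. Qed.

Lemma sumR_sublist {A} (l1 l2 : list A) (P : A -> bool) f :
  NoDup l1 -> NoDup l2 -> (forall x, In x l1 <-> In x l2 /\ P x = true) ->
  sumR l1 f = sumR l2 (fun x => if P x then f x else 0).
Proof.
  intros N1 N2 H. rewrite <- sumR_filter. apply sumR_perm, NoDup_Permutation; auto.
  - apply NoDup_filter; auto.
  - intros x; rewrite filter_In; apply H.
Qed.

Lemma sumR_seq_shift n f : sumR (seq 0 (S n)) f = f 0%nat + sumR (seq 0 n) (fun k => f (S k)).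
Proof. simpl. rewrite <- seq_shift, sumR_map. reflexivity. Qed.

Lemma sumR_seq_last n f : sumR (seq 0 (S n)) f = sumR (seq 0 n) f + f n.
Proof. rewrite seq_S, sumR_app. simpl. ring. Qed.

Lemma sumR_telescope (g : nat -> R) a :
  sumR (seq 0 (S a)) (fun b => g b - match b with O => 0 | S b' => g b' end) = g a.
Proof.
  induction a as [|a IH]; [simpl; ring|].
  rewrite sumR_seq_last, IH. ring.
Qed.

(** * Multi-indices *)

Lemma mi_leb_length i j : mi_leb i j = true -> length i = length j.
Proof.
  revert j; induction i as [|a i IH]; destruct j; simpl; try discriminate; auto.
  intros H; apply andb_prop in H as [_ H]. f_equal; auto.
Qed.

Lemma mi_leb_norm1 i j : mi_leb i j = true -> (norm1 i <= norm1 j)%nat.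
Proof.
  revert j; induction i as [|a i IH]; destruct j as [|b j]; simpl; try discriminate; try lia.
  intros H; apply andb_prop in H as [Hab H]. apply Nat.leb_le in Hab.
  specialize (IH _ H). unfold norm1 in *; simpl. lia.
Qed.

Lemma mi_leb_norm1_eq i j : mi_leb i j = true -> (norm1 j <= norm1 i)%nat -> i = j.
Proof.
  revert j; induction i as [|a i IH]; destruct j as [|b j]; simpl; try discriminate; auto.
  intros H; apply andb_prop in H as [Hab H]. apply Nat.leb_le in Hab.
  pose proof (mi_leb_norm1 _ _ H). unfold norm1 in *; simpl in *. intros.
  assert (a = b) by lia. subst. f_equal. apply IH; auto. lia.
Qed.

Lemma mi_leb_refl i : mi_leb i i = true.
Proof. induction i; simpl; auto. rewrite Nat.leb_refl; auto. Qed.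

Lemma norm1_cons a j : norm1 (a :: j) = (a + norm1 j)%nat.
Proof. reflexivity. Qed.

Lemma NoDup_flat_map_cons (f : nat -> list mi) s k :
  (forall a, NoDup (f a)) -> NoDup (flat_map (fun a => map (cons a) (f a)) (seq s k)).
Proof.
  intros Hf. revert s; induction k as [|k IH]; intros s; simpl; [constructor|].
  apply NoDup_app; auto.
  - apply FinFun.Injective_map_NoDup; auto. intros x y H; injection H; auto.
  - intros x H1 H2. apply in_map_iff in H1 as [y [<- _]].
    apply in_flat_map in H2 as [b [Hb Hy]]. apply in_map_iff in Hy as [z [Hz _]].
    injection Hz. apply in_seq in Hb. lia.
Qed.

Lemma In_box j i : In j (box i) <-> mi_leb j i = true.
Proof.
  revert j; induction i as [|a i IH]; intros j.
  - destruct j; simpl; split; intros H; auto; try discriminate.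
    destruct H as [H|[]]; discriminate.
  - cbn [box]. rewrite in_flat_map. split.
    + intros [b [Hb Hj]]. apply in_map_iff in Hj as [j' [<- Hj']].
      apply in_seq in Hb. simpl. apply andb_true_intro; split.
      * apply Nat.leb_le; lia.
      * apply IH; auto.
    + destruct j as [|b j']; intros H; simpl in H; try discriminate.
      apply andb_prop in H as [Hb H]. apply Nat.leb_le in Hb.
      exists b; split; [apply in_seq; lia | apply in_map, IH; auto].
Qed.

Lemma NoDup_box i : NoDup (box i).
Proof.
  induction i; cbn [box]; [repeat constructor; auto|].
  apply NoDup_flat_map_cons; auto.
Qed.

Lemma In_enum_mi d m j : In j (enum_mi d m) <-> length j = d /\ (norm1 j <= m)%nat.
Proof.
  revert m j; induction d as [|d IH]; intros m j.
  - simpl. split.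
    + intros [<-|[]]; simpl; split; auto; unfold norm1; simpl; lia.
    + intros [H _]. destruct j; simpl in H; try discriminate; auto.
  - cbn [enum_mi]. rewrite in_flat_map. split.
    + intros [b [Hb Hj]]. apply in_map_iff in Hj as [j' [<- Hj']].
      apply in_seq in Hb. apply IH in Hj'. rewrite norm1_cons. simpl. lia.
    + destruct j as [|b j']; intros [Hl Hn]; simpl in Hl; try discriminate.
      rewrite norm1_cons in Hn.
      exists b; split; [apply in_seq; lia | apply in_map, IH; lia].
Qed.

Lemma NoDup_enum_mi d m : NoDup (enum_mi d m).
Proof.
  revert m; induction d; intros m; cbn [enum_mi]; [repeat constructor; auto|].
  apply NoDup_flat_map_cons; auto.
Qed.

(** * Hierarchical surpluses *)

Definition surplus (V : mi -> R) (j : mi) : R :=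
  sumR (bvecs (length j))
    (fun s => match sub_idx j s with
              | Some m => (-1) ^ (count_occ Bool.bool_dec s true) * V m
              | None => 0
              end).

Lemma surplus_cons V b j :
  surplus V (b :: j) = surplus (fun m => V (b :: m)) j -
    match b with O => 0 | S b' => surplus (fun m => V (b' :: m)) j end.
Proof.
  unfold surplus. cbn [length bvecs flat_map map].
  rewrite app_nil_r, sumR_app, !sumR_map. cbn [sub_idx].
  destruct b as [|b].
  - rewrite sumR_zero, Rminus_0_r, Rplus_0_r. apply sumR_ext; intros s.
    destruct (sub_idx j s); simpl; ring.
  - unfold Rminus. rewrite <- sumR_opp.
    f_equal; apply sumR_ext; intros s; destruct (sub_idx j s); simpl; ring.
Qed.

Lemma sumR_box_surplus i V : sumR (box i) (surplus V) = V i.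
Proof.
  revert V; induction i as [|a i IH]; intros V.
  - unfold surplus. simpl. ring.
  - cbn [box]. rewrite sumR_flat_map.
    rewrite <- (sumR_telescope (fun b => V (b :: i)) a).
    apply sumR_ext; intros b. rewrite sumR_map.
    rewrite (sumR_ext _ _ _ (fun j => surplus_cons V b j)), sumR_minus, IH.
    destruct b; [rewrite sumR_zero | rewrite IH]; reflexivity.
Qed.

Lemma sumR_box_hsur (U : mi -> Fun) i x : sumR (box i) (fun j => hsur U j x) = U i x.
Proof. exact (sumR_box_surplus i (fun m => U m x)). Qed.

(** * The general coefficient problem on a downset *)

Definition downclosed (I : list mi) : Prop :=
  forall i j, In j I -> mi_leb i j = true -> In i I.

Lemma In_downset I j : In j (downset I) <-> exists i, In i I /\ mi_leb j i = true.
Proof.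
  unfold downset. rewrite nodup_In, in_flat_map.
  split; intros [i [Hi Hj]]; exists i; split; auto; apply In_box; auto.
Qed.

Lemma In_downset_downclosed I j : downclosed I -> In j (downset I) <-> In j I.
Proof.
  intros HD. rewrite In_downset. split.
  - intros [i [Hi Hji]]. eapply HD; eauto.
  - intros Hj. exists j. split; auto. apply mi_leb_refl.
Qed.

Lemma comb_eq_sum_wcoef u I c x :
  comb u I c x = sumR (downset I) (fun j => wcoef I c j * hsur (interp u) j x).
Proof.
  unfold comb, wcoef.
  rewrite (sumR_ext_in I _ (fun i => sumR (downset I)
        (fun j => c i * (if mi_leb j i then hsur (interp u) j x else 0)))).
  - rewrite sumR_swap. apply sumR_ext; intros j.
    rewrite Rmult_comm, <- sumR_scal. apply sumR_ext; intros i.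
    destruct (mi_leb j i); ring.
  - intros i Hi. rewrite sumR_scal, <- sumR_box_hsur. f_equal.
    apply sumR_sublist; [apply NoDup_box | apply NoDup_nodup |].
    intros j. rewrite In_box, In_downset. split.
    + intros Hj. split; eauto.
    + intros [_ H]. exact H.
Qed.

Lemma exists_norm1_max (a : mi) (I : list mi) :
  exists m, In m (a :: I) /\ forall j, In j (a :: I) -> (norm1 j <= norm1 m)%nat.
Proof.
  revert a; induction I as [|b I IH]; intros a.
  - exists a. split; [left; auto|]. intros j [<-|[]]; lia.
  - destruct (IH b) as [m [Hm Hmax]].
    destruct (le_lt_dec (norm1 a) (norm1 m)).
    + exists m. split; [right; auto|]. intros j [<-|Hj]; auto.
    + exists a. split; [left; auto|]. intros j [<-|Hj]; [lia|]. specialize (Hmax j Hj). lia.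
Qed.

(* The system [w_i = g_i] is triangular for [<=]: peel off an index of maximal
   norm, which no other index of [I] dominates. *)
Lemma wcoef_solvable (I : list mi) (g : mi -> R) :
  NoDup I -> exists c, forall i, In i I -> wcoef I c i = g i.
Proof.
  remember (length I) as k eqn:HL. symmetry in HL. revert I g HL.
  induction k as [k IH] using lt_wf_ind. intros I g HL HN.
  destruct I as [|i0 I0]; [exists (fun _ => 0); intros i []|].
  destruct (exists_norm1_max i0 I0) as [m [Hm Hmax]].
  destruct (in_split _ _ Hm) as [l1 [l2 Heq]].
  set (J := l1 ++ l2).
  assert (HP : Permutation (i0 :: I0) (m :: J)).
  { rewrite Heq. apply Permutation_sym, Permutation_middle. }
  assert (HNJ : NoDup (m :: J)) by (eapply Permutation_NoDup; eauto).
  apply NoDup_cons_iff in HNJ as [HmJ HNJ].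
  assert (Htop : forall j, In j J -> mi_leb m j = false).
  { intros j Hj. destruct (mi_leb m j) eqn:E; auto. exfalso. apply HmJ.
    rewrite (mi_leb_norm1_eq _ _ E); auto.
    apply Hmax, (Permutation_in _ (Permutation_sym HP)). right; auto. }
  assert (HLJ : length J = pred k).
  { apply Permutation_length in HP. simpl in HP, HL. lia. }
  destruct (IH (pred k) ltac:(simpl in HL; lia) J
      (fun i => g i - (if mi_leb i m then g m else 0)) HLJ HNJ) as [c0 Hc0].
  exists (fun j => if list_eq_dec Nat.eq_dec j m then g m else c0 j).
  intros i Hi. unfold wcoef. rewrite (sumR_perm _ _ _ HP). simpl sumR.
  destruct (list_eq_dec Nat.eq_dec m m) as [_|]; [|congruence].
  rewrite (sumR_ext_in J _ (fun j => if mi_leb i j then c0 j else 0)).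
  2:{ intros j Hj. destruct (list_eq_dec Nat.eq_dec j m); [subst; contradiction | auto]. }
  apply (Permutation_in _ HP) in Hi. destruct Hi as [<-|Hi].
  - rewrite mi_leb_refl, (sumR_ext_in _ _ (fun _ => 0)), sumR_zero; [ring|].
    intros j Hj. rewrite Htop; auto.
  - specialize (Hc0 i Hi). unfold wcoef in Hc0. rewrite Hc0. destruct (mi_leb i m); ring.
Qed.

(* Any admissible family with all [w_i = 1] beats every other admissible family,
   and it exists by [wcoef_solvable]. *)
Lemma gcp_solution_wcoef_1 I c : NoDup I -> downclosed I -> is_gcp_solution I c ->
  forall i, In i (downset I) -> wcoef I c i = 1.
Proof.
  intros HN HD [Hadm Hmax].
  destruct (wcoef_solvable I (fun _ => 1) HN) as [c1 Hc1].
  assert (Hc1' : forall i, In i (downset I) -> wcoef I c1 i = 1).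
  { intros i Hi. apply Hc1, (In_downset_downclosed I i HD); auto. }
  assert (Hdiff : Qp I c1 - Qp I c <= 0)
    by (pose proof (Hmax c1 (fun i Hi => or_intror (Hc1' i Hi))); lra).
  unfold Qp in Hdiff. rewrite <- sumR_minus in Hdiff.
  assert (Hnn : forall i, In i (downset I) ->
      0 <= (/ 4) ^ norm1 i * wcoef I c1 i - (/ 4) ^ norm1 i * wcoef I c i).
  { intros i Hi. assert (0 < (/ 4) ^ norm1 i) by (apply pow_lt; lra).
    rewrite Hc1' by auto. destruct (Hadm i Hi) as [->| ->]; lra. }
  intros i Hi. pose proof (sumR_nonneg_eq0 _ _ Hnn Hdiff i Hi) as H0.
  assert (0 < (/ 4) ^ norm1 i) by (apply pow_lt; lra).
  cbv beta in H0. rewrite Hc1' in H0 by auto. destruct (Hadm i Hi) as [E|E]; rewrite E in *; nra.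
Qed.

Lemma comb_gcp_solution u I c x : NoDup I -> downclosed I -> is_gcp_solution I c ->
  comb u I c x = sumR I (fun j => hsur (interp u) j x).
Proof.
  intros HN HD Hc. rewrite comb_eq_sum_wcoef.
  rewrite (sumR_ext_in _ _ (fun j => hsur (interp u) j x)).
  2:{ intros j Hj. rewrite (gcp_solution_wcoef_1 I c HN HD Hc j Hj). ring. }
  rewrite (sumR_sublist (downset I) I (fun _ => true)); [reflexivity | apply NoDup_nodup | auto |].
  intros j. rewrite In_downset_downclosed by auto. tauto.
Qed.

(** * Counting multi-indices by level *)

(* Number of multi-indices of length [d] and norm [k]: [C(k+d-1, d-1)]. *)
Definition level_count (d k : nat) : R :=
  match d with O => if Nat.eqb k 0 then 1 else 0 | S e => C (k + e) e end.

Lemma C_n_n n : C n n = 1.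
Proof. unfold C. rewrite Nat.sub_diag. simpl. field. apply INR_fact_neq_0. Qed.

Lemma C_n_0 n : C n 0 = 1.
Proof. unfold C. rewrite Nat.sub_0_r. simpl. field. apply INR_fact_neq_0. Qed.

Lemma C_nonneg n k : 0 <= C n k.
Proof.
  unfold C. apply Rmult_le_pos; [apply pos_INR|].
  apply Rlt_le, Rinv_0_lt_compat, Rmult_lt_0_compat; apply INR_fact_lt_0.
Qed.

Lemma level_count_0 d : level_count d 0 = 1.
Proof. destruct d; simpl; auto. apply C_n_n. Qed.

Lemma level_count_pascal e k :
  level_count (S e) (S k) = level_count e (S k) + level_count (S e) k.
Proof.
  destruct e as [|e]; simpl.
  - rewrite !C_n_0. ring.
  - replace (S k + S e)%nat with (S (S k + e)) by lia.
    replace (k + S e)%nat with (S k + e)%nat by lia. rewrite pascal by lia. reflexivity.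
Qed.

(* Split off the multi-indices with first entry [0]; the others are shifts. *)
Lemma sumR_enum_mi_S e m (g : nat -> R) :
  sumR (enum_mi (S e) (S m)) (fun j => g (norm1 j)) =
  sumR (enum_mi e (S m)) (fun j => g (norm1 j)) +
  sumR (enum_mi (S e) m) (fun j => g (S (norm1 j))).
Proof.
  cbn [enum_mi]. rewrite !sumR_flat_map, sumR_seq_shift, sumR_map.
  f_equal. apply sumR_ext; intros a. rewrite !sumR_map. reflexivity.
Qed.

Lemma sumR_enum_mi_levels d m (g : nat -> R) :
  sumR (enum_mi d m) (fun j => g (norm1 j)) =
  sumR (seq 0 (S m)) (fun k => level_count d k * g k).
Proof.
  revert m g; induction d as [|e IHe]; intros m g.
  - rewrite sumR_seq_shift.
    rewrite (sumR_ext (seq 0 m) _ (fun _ => 0)), sumR_zero by (intros; simpl; ring).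
    simpl. ring.
  - induction m as [|m IHm] in g |- *.
    + change (enum_mi (S e) 0) with (map (cons 0%nat) (enum_mi e 0) ++ []).
      rewrite app_nil_r, sumR_map, (sumR_ext _ _ (fun j => g (norm1 j))), (IHe 0%nat g)
        by reflexivity.
      simpl. rewrite !level_count_0, C_n_n. ring.
    + rewrite sumR_enum_mi_S, (IHm (fun k => g (S k))), IHe.
      rewrite !(sumR_seq_shift (S m)), !level_count_0.
      rewrite (sumR_ext _ (fun k => level_count (S e) (S k) * g (S k))
         (fun k => level_count e (S k) * g (S k) + level_count (S e) k * g (S k))).
      * rewrite sumR_plus. ring.
      * intros k. rewrite level_count_pascal. ring.
Qed.

Lemma sumR_seq_indicator (f : nat -> R) n m : (n <= m)%nat ->
  sumR (seq 0 (S m)) (fun k => if Nat.eqb k n then f k else 0) = f n.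
Proof.
  induction 1 as [|m Hnm IH].
  - rewrite sumR_seq_last, Nat.eqb_refl, (sumR_ext_in _ _ (fun _ => 0)), sumR_zero; [ring|].
    intros k Hk. apply in_seq in Hk. replace (Nat.eqb k n) with false; auto.
    symmetry; apply Nat.eqb_neq; lia.
  - rewrite sumR_seq_last, IH. replace (Nat.eqb (S m) n) with false; [ring|].
    symmetry; apply Nat.eqb_neq; lia.
Qed.

Definition binom_sum (M e : nat) : R := sum_f_R0 (fun k => C M k * (/ 3) ^ (e - k)) e.

(* Closed form of the tail [sum_{k > n} 4^-k C(k+e, e)]. *)
Definition level_tail (e n : nat) : R := / 3 * (/ 4) ^ n * binom_sum (n + S e) e.

Lemma binom_sum_S M e : binom_sum M (S e) = / 3 * binom_sum M e + C M (S e).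
Proof.
  unfold binom_sum. rewrite tech5, Nat.sub_diag, pow_O, Rmult_1_r, scal_sum.
  f_equal. apply sum_eq. intros k Hk.
  replace (S e - k)%nat with (S (e - k)) by lia. simpl. ring.
Qed.

Lemma binom_sum_pascal e M : (e < M)%nat ->
  4 * binom_sum M e - binom_sum (S M) e = 3 * C M e.
Proof.
  induction e as [|e IH]; intros H.
  - unfold binom_sum. simpl. rewrite !C_n_0. ring.
  - rewrite !binom_sum_S, <- pascal by lia.
    replace (4 * (/ 3 * binom_sum M e + C M (S e)) -
             (/ 3 * binom_sum (S M) e + (C M e + C M (S e))))
      with (/ 3 * (4 * binom_sum M e - binom_sum (S M) e) + 3 * C M (S e) - C M e) by ring.
    rewrite IH by lia. field.
Qed.

Lemma binom_sum_nonneg M e : 0 <= binom_sum M e.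
Proof.
  apply cond_pos_sum. intros k. apply Rmult_le_pos; [apply C_nonneg | apply pow_le; lra].
Qed.

Lemma C_le_binom_sum M e : C M e <= binom_sum M e.
Proof.
  destruct e; [unfold binom_sum; simpl; lra|].
  rewrite binom_sum_S. pose proof (binom_sum_nonneg M e). lra.
Qed.

Lemma level_tail_step e n :
  level_tail e n - level_tail e (S n) = (/ 4) ^ (S n) * level_count (S e) (S n).
Proof.
  unfold level_tail. simpl level_count.
  replace (S n + S e)%nat with (S (n + S e)) by lia.
  replace (binom_sum (S (n + S e)) e) with
    (4 * binom_sum (n + S e) e - 3 * C (n + S e) e)
    by (rewrite <- binom_sum_pascal by lia; ring).
  replace (S (n + e))%nat with (n + S e)%nat by lia. simpl pow. field.
Qed.

Lemma level_tail_nonneg e n : 0 <= level_tail e n.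
Proof.
  unfold level_tail. apply Rmult_le_pos; [apply Rmult_le_pos; [lra | apply pow_le; lra]|].
  apply binom_sum_nonneg.
Qed.

Lemma level_top_le_level_tail e n : (/ 4) ^ n * level_count (S e) n <= 3 * level_tail e n.
Proof.
  unfold level_tail. simpl level_count.
  assert (C (n + e) e <= C (n + S e) e).
  { destruct e as [|e]; [rewrite !C_n_0; lra|].
    replace (n + S (S e))%nat with (S (n + S e)) by lia.
    rewrite <- pascal by lia. pose proof (C_nonneg (n + S e) e). lra. }
  pose proof (C_le_binom_sum (n + S e) e).
  assert (0 <= (/ 4) ^ n) by (apply pow_le; lra).
  replace (3 * (/ 3 * (/ 4) ^ n * binom_sum (n + S e) e))
    with ((/ 4) ^ n * binom_sum (n + S e) e) by field.
  apply Rmult_le_compat_l; lra.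
Qed.

Lemma sumR_levels_above e n m : (n <= m)%nat ->
  sumR (seq 0 (S m)) (fun k => level_count (S e) k * (if Nat.ltb n k then (/ 4) ^ k else 0))
  = level_tail e n - level_tail e m.
Proof.
  induction 1 as [|m Hnm IH].
  - rewrite (sumR_ext_in _ _ (fun _ => 0)), sumR_zero; [ring|].
    intros k Hk. apply in_seq in Hk. replace (Nat.ltb n k) with false; [ring|].
    symmetry; apply Nat.ltb_ge; lia.
  - rewrite sumR_seq_last, IH. replace (Nat.ltb n (S m)) with true.
    + pose proof (level_tail_step e m). lra.
    + symmetry; apply Nat.ltb_lt; lia.
Qed.

Lemma eps_n_level_tail e n s : eps_n (S e) n s = (/ 3) ^ (S e) * s * level_tail e n.
Proof.
  unfold eps_n, level_tail, binom_sum. replace (S e - 1)%nat with e by lia. ring.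
Qed.

(** * Real powers *)

Lemma exp_le x y : x <= y -> exp x <= exp y.
Proof. intros [H | ->]; [apply Rlt_le, exp_increasing; auto | lra]. Qed.

Lemma exp_opp_le_1 x : 0 <= x -> exp (- x) <= 1.
Proof. intros H. rewrite <- exp_0. apply exp_le. lra. Qed.

Lemma rpow_pos x a : 0 < x -> rpow x a = Rpower x a.
Proof. intros H. unfold rpow. destruct (Rlt_dec 0 x); [auto | lra]. Qed.

Lemma rpow_nonpos x a : x <= 0 -> rpow x a = 0.
Proof. intros H. unfold rpow. destruct (Rlt_dec 0 x); [lra | auto]. Qed.

Lemma rpow_nonneg x a : 0 <= rpow x a.
Proof. unfold rpow. destruct (Rlt_dec 0 x); [apply Rlt_le, exp_pos | lra]. Qed.

Lemma Rpower_le_exp_antimono x a b : 0 < x <= 1 -> a <= b -> Rpower x b <= Rpower x a.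
Proof.
  intros Hx Hab. unfold Rpower. apply exp_le.
  assert (ln x <= 0).
  { destruct (Req_dec x 1) as [->|]; [rewrite ln_1; lra|].
    rewrite <- ln_1. apply Rlt_le, ln_increasing; lra. }
  nra.
Qed.

Lemma Rpower_le_base x a : 0 < x <= 1 -> 1 <= a -> Rpower x a <= x.
Proof. intros Hx Ha. rewrite <- (Rpower_1 x) at 2 by lra. apply Rpower_le_exp_antimono; lra. Qed.

Lemma Rpower_ge_base x a : 0 < x <= 1 -> a <= 1 -> x <= Rpower x a.
Proof. intros Hx Ha. rewrite <- (Rpower_1 x) at 1 by lra. apply Rpower_le_exp_antimono; lra. Qed.

Lemma Rpower_ge_base_ge_1 x a : 1 <= x -> 1 <= a -> x <= Rpower x a.
Proof. intros Hx Ha. rewrite <- (Rpower_1 x) at 1 by lra. apply Rle_Rpower; lra. Qed.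

(* With [p = x / (x + y)], subadditivity is [p + (1 - p) <= p^k + (1 - p)^k]. *)
Lemma rpow_subadditive x y k : 0 <= x -> 0 <= y -> 0 < k <= 1 ->
  rpow (x + y) k <= rpow x k + rpow y k.
Proof.
  intros Hx Hy Hk.
  destruct (Req_dec x 0) as [->|Hx0]; [rewrite Rplus_0_l, (rpow_nonpos 0) by lra; lra|].
  destruct (Req_dec y 0) as [->|Hy0]; [rewrite Rplus_0_r, (rpow_nonpos 0) by lra; lra|].
  rewrite !rpow_pos by lra. set (s := x + y).
  assert (Hs : 0 < s) by (unfold s; lra).
  assert (Hfrac : forall z, 0 < z <= s -> z / s <= Rpower (z / s) k).
  { intros z Hz. apply Rpower_ge_base; [|lra]. split; [apply Rdiv_lt_0_compat; lra|].
    apply Rmult_le_reg_r with s; [lra|]. unfold Rdiv. rewrite Rmult_assoc, Rinv_l; lra. }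
  pose proof (Hfrac x ltac:(unfold s; lra)). pose proof (Hfrac y ltac:(unfold s; lra)).
  replace (Rpower x k) with (Rpower (s * (x / s)) k) by (f_equal; field; lra).
  replace (Rpower y k) with (Rpower (s * (y / s)) k) by (f_equal; field; lra).
  rewrite <- !Rpower_mult_distr by (try apply Rdiv_lt_0_compat; lra).
  assert (0 < Rpower s k) by apply exp_pos.
  assert (x / s + y / s = 1) by (unfold s; field; lra).
  nra.
Qed.

Lemma rpow_le_compat x y k : 0 <= x <= y -> 0 < k -> rpow x k <= rpow y k.
Proof.
  intros H Hk. destruct (Req_dec x 0) as [->|Hx].
  - rewrite (rpow_nonpos 0) by lra. apply rpow_nonneg.
  - rewrite !rpow_pos by lra. apply Rle_Rpower_l; lra.
Qed.

(* [a ln Y <= a ln (2a) + Y/2 - a] by [ln z <= z - 1] at [z = Y / (2a)]. *)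
Lemma rpow_exp_opp_vanishes a eps : 0 < a -> 0 < eps -> exists Y0,
  forall Y, Y0 <= Y -> rpow Y a * exp (- Y) <= eps.
Proof.
  intros Ha He. exists (Rmax 1 (2 * (a * ln (2 * a) - a - ln eps))).
  intros Y HY. pose proof (Rmax_l 1 (2 * (a * ln (2 * a) - a - ln eps))).
  pose proof (Rmax_r 1 (2 * (a * ln (2 * a) - a - ln eps))).
  rewrite rpow_pos by lra. unfold Rpower. rewrite <- exp_plus, <- (exp_ln eps) by lra.
  apply exp_le.
  assert (Hz : 0 < Y / (2 * a)) by (apply Rdiv_lt_0_compat; lra).
  assert (Hln : ln (Y / (2 * a)) <= Y / (2 * a) - 1).
  { pose proof (exp_ineq1_le (ln (Y / (2 * a)))) as Hexp. rewrite exp_ln in Hexp by lra. lra. }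
  assert (Hsplit : ln Y = ln (2 * a) + ln (Y / (2 * a))).
  { rewrite <- ln_mult by lra. f_equal. field. lra. }
  assert (HlnY : a * ln Y <= a * ln (2 * a) + a * (Y / (2 * a) - 1)) by (rewrite Hsplit; nra).
  replace (a * (Y / (2 * a) - 1)) with (Y / 2 - a) in HlnY by (field; lra).
  lra.
Qed.

Lemma rpow_derive a z : 0 < z -> derivable_pt_lim (fun t => rpow t a) z (a * Rpower z (a - 1)).
Proof.
  intros Hz. apply (derivable_pt_lim_locally_ext (fun t => Rpower t a) _ z 0 (z + 1));
    [lra | intros t Ht; rewrite rpow_pos; lra | apply derivable_pt_lim_power; auto].
Qed.

Lemma rpow_continuous a z : 0 < a -> continuity_pt (fun t => rpow t a) z.
Proof.
  intros Ha. destruct (Rlt_le_dec 0 z) as [Hz|Hz].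
  - apply derivable_continuous_pt. exists (a * Rpower z (a - 1)). apply rpow_derive; auto.
  - destruct (Rlt_le_dec z 0) as [Hz'|Hz'].
    + apply (continuity_pt_locally_ext (fun _ => 0) _ (- z));
        [lra | | apply continuity_pt_const; intros u v; reflexivity].
      intros y Hy. unfold Rdist in Hy. apply Rabs_def2 in Hy. rewrite rpow_nonpos; lra.
    + (* At [0]: [x ^ a < eps] as soon as [0 < x < eps ^ (1/a)]. *)
      assert (z = 0) by lra. subst z.
      intros eps Heps. exists (exp (ln eps / a)). split; [apply exp_pos|].
      intros x [_ Hx]. simpl in *. unfold R_dist in *.
      rewrite (rpow_nonpos 0), Rminus_0_r by lra. rewrite Rminus_0_r in Hx.
      destruct (Rle_lt_dec x 0); [rewrite rpow_nonpos, Rabs_R0 by lra; auto|].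
      rewrite rpow_pos, Rabs_pos_eq by (try apply Rlt_le, exp_pos; lra).
      rewrite Rabs_pos_eq in Hx by lra.
      unfold Rpower. rewrite <- (exp_ln eps) by lra. apply exp_increasing.
      assert (ln x < ln eps / a).
      { rewrite <- (ln_exp (ln eps / a)). apply ln_increasing; lra. }
      apply Rmult_lt_reg_l with (/ a); [apply Rinv_0_lt_compat; lra|].
      replace (/ a * (a * ln x)) with (ln x) by (field; lra).
      replace (/ a * ln eps) with (ln eps / a) by (field; lra). lra.
Qed.

(** * Weibull random incidence *)

Section Weibull.
Import Coquelicot.Coquelicot.

Variables lam kap : R.
Hypothesis hlam : 0 < lam.
Hypothesis hkap0 : 0 < kap.
Hypothesis hkap1 : kap <= 1.

Definition surv (x : R) : R := exp (- rpow (x / lam) kap).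
Definition surv_int (X : R) : R := RInt surv 0 X.
Definition gamma_integrand (y : R) : R := rpow y (/ kap) * exp (- y).
Definition gamma_partial (Y : R) : R := RInt gamma_integrand 0 Y.
Definition cum_hazard_inv (Y : R) : R := lam * rpow Y (/ kap).

Lemma inv_kap_ge_1 : 1 <= / kap.
Proof. rewrite <- Rinv_1. apply Rinv_le_contravar; lra. Qed.

Lemma surv_continuous x : continuity_pt surv x.
Proof.
  unfold surv. apply (continuity_pt_comp (fun x => - rpow (x / lam) kap) exp);
    [|apply derivable_continuous_pt, derivable_pt_exp].
  apply (continuity_pt_opp (fun x => rpow (x / lam) kap)).
  apply (continuity_pt_comp (fun x => x / lam) (fun t => rpow t kap));
    [|apply rpow_continuous; auto].
  apply (continuity_pt_mult id (fct_cte (/ lam))).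
  - apply derivable_continuous_pt, derivable_pt_id.
  - apply continuity_pt_const. intros u v; reflexivity.
Qed.

Lemma gamma_integrand_continuous y : continuity_pt gamma_integrand y.
Proof.
  unfold gamma_integrand. apply (continuity_pt_mult (fun y => rpow y (/ kap)) (fun y => exp (- y))).
  - apply rpow_continuous. pose proof inv_kap_ge_1. lra.
  - apply (continuity_pt_comp (fun y => - y) exp);
      [|apply derivable_continuous_pt, derivable_pt_exp].
    apply (continuity_pt_opp id), derivable_continuous_pt, derivable_pt_id.
Qed.

Lemma ex_RInt_surv a b : ex_RInt surv a b.
Proof.
  apply (@ex_RInt_continuous R_CompleteNormedModule). intros z _.
  apply continuity_pt_filterlim, surv_continuous.
Qed.

Lemma ex_RInt_gamma_integrand a b : ex_RInt gamma_integrand a b.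
Proof.
  apply (@ex_RInt_continuous R_CompleteNormedModule). intros z _.
  apply continuity_pt_filterlim, gamma_integrand_continuous.
Qed.

Lemma surv_int_derive X : derivable_pt_lim surv_int X (surv X).
Proof.
  apply is_derive_Reals, (is_derive_RInt surv surv_int 0 X).
  - apply filter_forall. intros b. apply (@RInt_correct R_CompleteNormedModule), ex_RInt_surv.
  - apply continuity_pt_filterlim, surv_continuous.
Qed.

Lemma gamma_partial_derive Y : derivable_pt_lim gamma_partial Y (gamma_integrand Y).
Proof.
  apply is_derive_Reals, (is_derive_RInt gamma_integrand gamma_partial 0 Y).
  - apply filter_forall. intros b.
    apply (@RInt_correct R_CompleteNormedModule), ex_RInt_gamma_integrand.
  - apply continuity_pt_filterlim, gamma_integrand_continuous.
Qed.

Lemma surv_bounds x : 0 < surv x <= 1.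
Proof. split; [apply exp_pos | apply exp_opp_le_1, rpow_nonneg]. Qed.

Lemma RInt_unit_bounds f X : 0 <= X -> ex_RInt f 0 X ->
  (forall x, 0 < x < X -> 0 <= f x <= 1) -> 0 <= RInt f 0 X <= X.
Proof.
  intros HX Hf Hb. split.
  - apply RInt_ge_0; auto. intros x Hx. apply Hb; auto.
  - replace X with (RInt (fun _ => 1) 0 X) at 2
      by (rewrite RInt_const; unfold scal; simpl; unfold mult; simpl; ring).
    apply RInt_le; auto; [apply ex_RInt_const|]. intros x Hx. apply Hb; auto.
Qed.

Lemma surv_int_bounds X : 0 <= X -> 0 <= surv_int X <= X.
Proof.
  intros HX. apply RInt_unit_bounds; [auto | apply ex_RInt_surv |].
  intros x _. pose proof (surv_bounds x). lra.
Qed.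

Lemma surv_int_0 : surv_int 0 = 0.
Proof. apply (@RInt_point R_CompleteNormedModule). Qed.

Lemma surv_int_le_compat b c : b <= c -> surv_int b <= surv_int c.
Proof.
  intros H. unfold surv_int. rewrite <- (RInt_Chasles surv 0 b c) by apply ex_RInt_surv.
  assert (0 <= RInt surv b c).
  { apply RInt_ge_0; auto; [apply ex_RInt_surv|]. intros x _. pose proof (surv_bounds x). lra. }
  change (plus (RInt surv 0 b) (RInt surv b c)) with (RInt surv 0 b + RInt surv b c). lra.
Qed.

Lemma gamma_integrand_bounds y : 0 <= y <= 1 -> 0 <= gamma_integrand y <= y.
Proof.
  intros Hy. unfold gamma_integrand. pose proof (exp_opp_le_1 y ltac:(lra)).
  pose proof (exp_pos (- y)). pose proof (rpow_nonneg y (/ kap)).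
  assert (rpow y (/ kap) <= y).
  { destruct (Req_dec y 0) as [->|Hy0]; [rewrite rpow_nonpos; lra|].
    rewrite rpow_pos by lra. apply Rpower_le_base; [lra | apply inv_kap_ge_1]. }
  split; [apply Rmult_le_pos|]; nra.
Qed.

Lemma gamma_partial_bounds Y : 0 <= Y <= 1 -> 0 <= gamma_partial Y <= Y.
Proof.
  intros HY. apply RInt_unit_bounds; [lra | apply ex_RInt_gamma_integrand |].
  intros x Hx. pose proof (gamma_integrand_bounds x ltac:(lra)). lra.
Qed.

Lemma surv_cum_hazard_inv Y : 0 < Y -> surv (cum_hazard_inv Y) = exp (- Y).
Proof.
  intros HY. unfold surv, cum_hazard_inv. do 2 f_equal.
  replace (lam * rpow Y (/ kap) / lam) with (rpow Y (/ kap)) by (field; lra).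
  rewrite (rpow_pos Y), rpow_pos, Rpower_mult, Rinv_l, Rpower_1 by (try apply exp_pos; lra).
  reflexivity.
Qed.

(* The substitution [x = lam y^(1/kap)] followed by an integration by parts:
   [int_0^{lam Y^(1/kap)} surv = lam (Y^(1/kap) e^-Y + int_0^Y y^(1/kap) e^-y dy]. *)
Definition substitution_defect (Y : R) : R :=
  / lam * surv_int (cum_hazard_inv Y) - gamma_integrand Y - gamma_partial Y.

Lemma substitution_defect_derive Y : 0 < Y -> derivable_pt_lim substitution_defect Y 0.
Proof.
  intros HY. set (a := / kap). set (da := a * Rpower Y (a - 1)).
  assert (Hinv : derivable_pt_lim cum_hazard_inv Y (lam * da))
    by (apply (derivable_pt_lim_scal (fun t => rpow t a)), rpow_derive; auto).
  assert (H1 : derivable_pt_lim (fun y => / lam * surv_int (cum_hazard_inv y)) Y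
                 (/ lam * (surv (cum_hazard_inv Y) * (lam * da)))).
  { apply (derivable_pt_lim_scal (fun y => surv_int (cum_hazard_inv y))).
    apply (derivable_pt_lim_comp cum_hazard_inv surv_int); auto. apply surv_int_derive. }
  assert (H2 : derivable_pt_lim gamma_integrand Y (da * exp (- Y) + rpow Y a * (- exp (- Y)))).
  { apply (derivable_pt_lim_mult (fun y => rpow y a) (fun y => exp (- y))).
    - apply rpow_derive; auto.
    - replace (- exp (- Y)) with (exp (- Y) * - (1)) by ring.
      apply (derivable_pt_lim_comp (fun y => - y) exp);
        [apply (derivable_pt_lim_opp id), derivable_pt_lim_id | apply derivable_pt_lim_exp]. }
  pose proof (derivable_pt_lim_minus _ _ _ _ _
    (derivable_pt_lim_minus _ _ _ _ _ H1 H2) (gamma_partial_derive Y)) as H.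
  replace 0 with (/ lam * (surv (cum_hazard_inv Y) * (lam * da)) -
       (da * exp (- Y) + rpow Y a * - exp (- Y)) - gamma_integrand Y); [exact H|].
  rewrite surv_cum_hazard_inv by auto. unfold gamma_integrand. fold a. field. lra.
Qed.

Lemma substitution_defect_small d : 0 < d <= 1 -> Rabs (substitution_defect d) <= 2 * d.
Proof.
  intros Hd. unfold substitution_defect.
  assert (Hinv : 0 <= cum_hazard_inv d <= lam * d).
  { unfold cum_hazard_inv. rewrite rpow_pos by lra.
    pose proof (Rpower_le_base d (/ kap) ltac:(lra) inv_kap_ge_1).
    assert (0 < Rpower d (/ kap)) by apply exp_pos. nra. }
  pose proof (surv_int_bounds (cum_hazard_inv d) ltac:(lra)).
  assert (0 <= / lam * surv_int (cum_hazard_inv d) <= d).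
  { split; [apply Rmult_le_pos; [apply Rlt_le, Rinv_0_lt_compat|]; lra|].
    apply Rmult_le_reg_l with lam; auto. rewrite <- Rmult_assoc, Rinv_r by lra. lra. }
  pose proof (gamma_integrand_bounds d ltac:(lra)).
  pose proof (gamma_partial_bounds d ltac:(lra)).
  apply Rabs_le. lra.
Qed.

Lemma substitution_defect_0 Y : 0 < Y -> substitution_defect Y = 0.
Proof.
  intros HY.
  assert (Hconst : forall d, 0 < d < Y -> substitution_defect Y = substitution_defect d).
  { intros d Hd.
    destruct (MVT_cor2 substitution_defect (fun _ => 0) d Y) as [c [Hc _]]; [lra | | lra].
    intros c Hc. apply substitution_defect_derive. lra. }
  apply Rabs_eq_0, Rle_antisym; [|apply Rabs_pos].
  apply le_epsilon. intros eps He. rewrite Rplus_0_l.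
  set (d := Rmin (Y / 2) (Rmin 1 (eps / 2))).
  assert (0 < d) by (unfold d; repeat apply Rmin_pos; lra).
  pose proof (Rmin_l (Y / 2) (Rmin 1 (eps / 2))).
  pose proof (Rmin_l 1 (eps / 2)). pose proof (Rmin_r 1 (eps / 2)).
  pose proof (Rmin_r (Y / 2) (Rmin 1 (eps / 2))).
  rewrite (Hconst d) by (unfold d in *; lra).
  pose proof (substitution_defect_small d ltac:(unfold d in *; lra)). unfold d in *. lra.
Qed.

Lemma surv_int_cum_hazard_inv Y : 0 < Y ->
  surv_int (cum_hazard_inv Y) = lam * (gamma_integrand Y + gamma_partial Y).
Proof.
  intros HY. pose proof (substitution_defect_0 Y HY) as H. unfold substitution_defect in H.
  apply Rmult_eq_reg_l with (/ lam); [|apply Rinv_neq_0_compat; lra].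
  rewrite <- Rmult_assoc, Rinv_l by lra. lra.
Qed.

(* Weibull lifetimes with [kap <= 1] are "new worse than used". *)
Lemma surv_mul_le t c : 0 <= t -> 0 <= c -> surv t * surv c <= surv (t + c).
Proof.
  intros Ht Hc. unfold surv. rewrite <- exp_plus. apply exp_le.
  replace ((t + c) / lam) with (t / lam + c / lam) by (field; lra).
  assert (0 <= t / lam) by (apply Rdiv_le_0_compat; lra).
  assert (0 <= c / lam) by (apply Rdiv_le_0_compat; lra).
  pose proof (rpow_subadditive (t / lam) (c / lam) kap). lra.
Qed.

Lemma surv_int_nwu t X : 0 <= t -> 0 <= X ->
  surv_int t + surv t * surv_int X <= surv_int (t + X).
Proof.
  intros Ht HX. destruct (Req_dec X 0) as [->|HX0]; [rewrite surv_int_0, Rplus_0_r; lra|].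
  set (D := fun x => surv_int (t + x) - surv_int t - surv t * surv_int x).
  destruct (MVT_cor2 D (fun x => surv (t + x) * 1 - 0 - surv t * surv x) 0 X)
    as [c [Hc Hc0]]; [lra| |].
  - intros c _. unfold D. apply derivable_pt_lim_minus; [apply derivable_pt_lim_minus|].
    + apply (derivable_pt_lim_comp (fun x => t + x) surv_int); [|apply surv_int_derive].
      rewrite <- (Rplus_0_l 1). apply (derivable_pt_lim_plus (fun _ => t) id);
        [apply derivable_pt_lim_const | apply derivable_pt_lim_id].
    + apply derivable_pt_lim_const.
    + apply (derivable_pt_lim_scal surv_int), surv_int_derive.
  - pose proof (surv_mul_le t c Ht ltac:(lra)).
    unfold D in Hc. rewrite Rplus_0_r, surv_int_0 in Hc. nra.
Qed.

Lemma cum_hazard_inv_ge Y : 1 <= Y -> lam * Y <= cum_hazard_inv Y.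
Proof.
  intros HY. unfold cum_hazard_inv. rewrite rpow_pos by lra.
  apply Rmult_le_compat_l; [lra|]. apply Rpower_ge_base_ge_1; [lra | apply inv_kap_ge_1].
Qed.

(* [surv_int] tends to [lam * Gam]: squeeze it between two values at points
   [cum_hazard_inv Y], where [gamma_integrand Y] vanishes and [gamma_partial Y]
   tends to [Gam]. *)
Lemma surv_int_tends Gam :
  (forall e, 0 < e -> exists M, forall Y, M <= Y -> Rabs (gamma_partial Y - Gam) < e) ->
  forall e, 0 < e -> exists X0, forall X, X0 <= X -> Rabs (surv_int X - lam * Gam) <= e.
Proof.
  intros HGam e He. set (e' := e / (2 * lam)).
  assert (He' : 0 < e') by (apply Rdiv_lt_0_compat; lra).
  destruct (HGam e' He') as [M HM].
  destruct (rpow_exp_opp_vanishes (/ kap) e') as [Y0 HY0];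
    [pose proof inv_kap_ge_1; lra | auto |].
  assert (Hlam_e : lam * e' = e / 2) by (unfold e'; field; lra).
  set (Y1 := Rmax M 1). exists (cum_hazard_inv Y1). intros X HX.
  pose proof (Rmax_l M 1). pose proof (Rmax_r M 1).
  set (Y2 := Rmax (Rmax M Y0) (Rmax 1 (X / lam))).
  pose proof (Rmax_l (Rmax M Y0) (Rmax 1 (X / lam))).
  pose proof (Rmax_r (Rmax M Y0) (Rmax 1 (X / lam))).
  pose proof (Rmax_l M Y0). pose proof (Rmax_r M Y0).
  pose proof (Rmax_l 1 (X / lam)). pose proof (Rmax_r 1 (X / lam)).
  assert (HX2 : X <= cum_hazard_inv Y2).
  { eapply Rle_trans; [|apply cum_hazard_inv_ge; unfold Y2; lra].
    replace X with (lam * (X / lam)) at 1 by (field; lra).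
    apply Rmult_le_compat_l; unfold Y2; lra. }
  pose proof (surv_int_le_compat _ _ HX) as Hlow.
  pose proof (surv_int_le_compat _ _ HX2) as Hup.
  rewrite surv_int_cum_hazard_inv in Hlow, Hup by (unfold Y1, Y2 in *; lra).
  pose proof (HM Y1 ltac:(unfold Y1; lra)) as HG1. pose proof (HM Y2 ltac:(unfold Y2; lra)) as HG2.
  pose proof (HY0 Y2 ltac:(unfold Y2; lra)) as Hg2.
  pose proof (rpow_nonneg Y1 (/ kap)). pose proof (exp_pos (- Y1)).
  assert (0 <= gamma_integrand Y1) by (unfold gamma_integrand; apply Rmult_le_pos; lra).
  apply Rabs_def2 in HG1. apply Rabs_def2 in HG2. apply Rabs_le. fold (gamma_integrand Y2) in Hg2.
  nra.
Qed.

Lemma surv_int_le Gam :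
  (forall e, 0 < e -> exists M, forall Y, M <= Y -> Rabs (gamma_partial Y - Gam) < e) ->
  forall t, 0 <= t -> surv_int t <= lam * Gam * (1 - surv t).
Proof.
  intros HGam t Ht. apply le_epsilon. intros eps He.
  destruct (surv_int_tends Gam HGam (eps / 2)) as [X0 HX0]; [lra|].
  set (X := Rmax 0 X0). pose proof (Rmax_l 0 X0). pose proof (Rmax_r 0 X0).
  pose proof (HX0 X ltac:(unfold X; lra)) as HA.
  pose proof (HX0 (t + X) ltac:(unfold X; lra)) as HtA.
  apply Rabs_le_between in HA. apply Rabs_le_between in HtA.
  pose proof (surv_int_nwu t X Ht ltac:(unfold X; lra)).
  pose proof (surv_bounds t). nra.
Qed.

Lemma weibull_G_le t g : 0 <= t -> weibull_G lam kap t g -> g <= 1 - surv t.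
Proof.
  intros Ht [Gam [w [HG [[pr Hw] ->]]]].
  rewrite <- Hw, <- RInt_Reals. change (RInt _ 0 t) with (surv_int t).
  assert (HGam : forall e, 0 < e -> exists M, forall Y, M <= Y -> Rabs (gamma_partial Y - Gam) < e).
  { intros e He. destruct (HG e He) as [M HM]. exists M. intros Y HY.
    destruct (HM Y HY) as [v [[prv Hv] Hlt]].
    replace (gamma_partial Y) with v; auto. rewrite <- Hv, <- RInt_Reals.
    apply RInt_ext. intros x _. unfold gamma_integrand. do 3 f_equal. ring. }
  pose proof (surv_int_le Gam HGam t Ht). pose proof (surv_bounds t).
  pose proof (surv_int_bounds t Ht).
  (* [Gam > 0] is not assumed; for [lam * Gam <= 0] the quotient is [<= 0] ([/ 0 = 0]). *)
  destruct (Rlt_le_dec 0 (lam * Gam)) as [Hp|Hp].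
  - apply Rmult_le_reg_r with (lam * Gam); auto. unfold Rdiv.
    rewrite Rmult_assoc, Rinv_l by lra. nra.
  - destruct (Req_dec (lam * Gam) 0) as [E|E].
    + rewrite E. unfold Rdiv. rewrite Rinv_0. lra.
    + assert (/ (lam * Gam) < 0) by (apply Rinv_lt_0_compat; lra).
      assert (surv_int t * / (lam * Gam) <= 0) by nra.
      unfold Rdiv. lra.
Qed.

Lemma weibull_G_le_surv t tn g : 0 <= t <= tn -> weibull_G lam kap t g -> g <= 1 - surv tn.
Proof.
  intros Ht HG. pose proof (weibull_G_le t g ltac:(lra) HG).
  assert (surv tn <= surv t); [|lra].
  apply exp_le, Ropp_le_contravar, rpow_le_compat; [|auto].
  split; [apply Rdiv_le_0_compat|apply Rmult_le_compat_r; [apply Rlt_le, Rinv_0_lt_compat|]]; lra.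
Qed.

End Weibull.

(** * Error of the combination for one outcome *)

Lemma In_Iprime d n a j :
  In j (Iprime d n a) <-> (length j = d /\ (norm1 j <= n)%nat) /\ a j = false.
Proof. unfold Iprime. rewrite filter_In, In_enum_mi, negb_true_iff. reflexivity. Qed.

Lemma Iprime_downclosed d n (a : mi -> bool) :
  (forall i, In i (enum_mi d n) -> (norm1 i < n)%nat -> a i = false) ->
  downclosed (Iprime d n a).
Proof.
  intros Hlow i j Hj Hij. apply In_Iprime in Hj as [[Hl Hn] Haj].
  pose proof (mi_leb_length _ _ Hij). pose proof (mi_leb_norm1 _ _ Hij).
  apply In_Iprime. split; [lia|].
  destruct (le_lt_dec (norm1 j) (norm1 i)) as [Hle|Hlt].
  - rewrite (mi_leb_norm1_eq _ _ Hij Hle); auto.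
  - apply Hlow; [apply In_enum_mi|]; lia.
Qed.

(* An index outside [I'] is either above level [n] or a failed index of level [n]. *)
Lemma dropped_term_le n k (failed : bool) v b : ((k < n)%nat -> failed = false) ->
  v <= b -> 0 <= b ->
  (if Nat.leb k n && negb failed then 0 else v) <=
  (if Nat.ltb n k then b else 0) + (if Nat.eqb k n && failed then b else 0).
Proof.
  intros Hlow Hv Hb.
  destruct (Nat.ltb_spec n k); destruct (Nat.leb_spec k n); try lia;
    destruct (Nat.eqb_spec k n); destruct failed; simpl; try lra.
  assert (Hlt : (k < n)%nat) by lia. specialize (Hlow Hlt). discriminate.
Qed.

Section SeminormBounds.
Variable nrm : Fun -> R.
Hypothesis nrm_tri : forall f g : Fun, nrm (fun x => f x + g x) <= nrm f + nrm g.
Hypothesis nrm_hom : forall (c : R) (f : Fun), nrm (fun x => c * f x) = Rabs c * nrm f.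

Lemma nrm_zero : nrm (fun _ => 0) = 0.
Proof.
  pose proof (nrm_hom 0 (fun _ => 0)) as H. rewrite Rabs_R0 in H.
  replace (fun _ : nat -> R => 0 * 0) with (fun _ : nat -> R => 0) in H
    by (apply functional_extensionality; intros; ring).
  lra.
Qed.

Lemma nrm_sumR {A} (l : list A) (F : A -> Fun) :
  nrm (fun x => sumR l (fun j => F j x)) <= sumR l (fun j => nrm (F j)).
Proof.
  induction l as [|a l IH]; simpl; [rewrite nrm_zero; lra|].
  pose proof (nrm_tri (F a) (fun x => sumR l (fun j => F j x))). lra.
Qed.

(* With [I'] downclosed the GCP combination is the sum of the surpluses on [I'],
   so only the surpluses outside [I'] (and the truncation at level [m]) remain. *)
Lemma gcp_error_le d n m u eps (a : mi -> bool) c : (n <= m)%nat ->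
  (forall i, In i (enum_mi d n) -> (norm1 i < n)%nat -> a i = false) ->
  is_gcp_solution (Iprime d n a) c ->
  nrm (fun x => u x - sumR (enum_mi d m) (fun j => hsur (interp u) j x)) < eps ->
  nrm (fun x => u x - comb u (Iprime d n a) c x) <=
  eps + sumR (enum_mi d m) (fun j =>
          if Nat.leb (norm1 j) n && negb (a j) then 0 else nrm (hsur (interp u) j)).
Proof.
  intros Hnm Hlow Hc Hm.
  set (kept := fun j => Nat.leb (norm1 j) n && negb (a j)).
  set (H := hsur (interp u)).
  assert (Hcomb : forall x, comb u (Iprime d n a) c x =
      sumR (enum_mi d m) (fun j => if kept j then H j x else 0)).
  { intros x. rewrite comb_gcp_solution;
      [| apply NoDup_filter, NoDup_enum_mi | apply Iprime_downclosed; auto | auto].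
    apply sumR_sublist; [apply NoDup_filter, NoDup_enum_mi | apply NoDup_enum_mi |].
    intros j. rewrite In_Iprime, In_enum_mi. unfold kept.
    rewrite andb_true_iff, Nat.leb_le, negb_true_iff. intuition lia. }
  assert (Hsplit : (fun x => u x - comb u (Iprime d n a) c x) =
      (fun x => (u x - sumR (enum_mi d m) (fun j => H j x)) +
                sumR (enum_mi d m) (fun j => if kept j then 0 else H j x))).
  { apply functional_extensionality; intros x. rewrite Hcomb.
    rewrite (sumR_ext _ (fun j => H j x)
               (fun j => (if kept j then H j x else 0) + (if kept j then 0 else H j x)))
      by (intros j; destruct (kept j); ring).
    rewrite sumR_plus. ring. }
  rewrite Hsplit. eapply Rle_trans; [apply nrm_tri|]. apply Rplus_le_compat; [unfold H; lra|].
  eapply Rle_trans; [apply (nrm_sumR _ (fun j x => if kept j then 0 else H j x))|].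
  apply Req_le, sumR_ext. intros j. unfold kept.
  destruct (Nat.leb (norm1 j) n && negb (a j)); [apply nrm_zero | reflexivity].
Qed.

Lemma gcp_error_le_levels d n m u s eps (a : mi -> bool) c : (n <= m)%nat -> 0 <= s ->
  (forall j : mi, length j = d -> nrm (hsur (interp u) j) <= (/ 3) ^ d * (/ 4) ^ norm1 j * s) ->
  (forall i, In i (enum_mi d n) -> (norm1 i < n)%nat -> a i = false) ->
  is_gcp_solution (Iprime d n a) c ->
  nrm (fun x => u x - sumR (enum_mi d m) (fun j => hsur (interp u) j x)) < eps ->
  nrm (fun x => u x - comb u (Iprime d n a) c x) <=
  eps + sumR (enum_mi d m)
          (fun j => if Nat.ltb n (norm1 j) then (/ 3) ^ d * (/ 4) ^ norm1 j * s else 0)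
      + sumR (enum_mi d m)
          (fun j => if Nat.eqb (norm1 j) n && a j then (/ 3) ^ d * (/ 4) ^ norm1 j * s else 0).
Proof.
  intros Hnm Hs Hbound Hlow Hc Hm.
  eapply Rle_trans; [apply (gcp_error_le d n m); eauto|].
  rewrite Rplus_assoc, <- sumR_plus. apply Rplus_le_compat_l, sumR_le.
  intros j Hj. apply In_enum_mi in Hj as [Hl _]. apply dropped_term_le; auto.
  - intros Hlt. apply Hlow; [apply In_enum_mi|]; lia.
  - apply Rmult_le_pos; [apply Rmult_le_pos; apply pow_le|]; lra.
Qed.

End SeminormBounds.

(** * Expected error *)

Lemma sumR_weighted_indicators (om : list (R * (mi -> bool))) K (L : list mi) P b :
  sumR om fst = 1 ->
  sumR om (fun pa => fst pa * (K + sumR L (fun j => if P j && snd pa j then b j else 0)))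
  = K + sumR L (fun j => if P j then b j * prob1 om j else 0).
Proof.
  intros Hom.
  rewrite (sumR_ext om _ (fun pa => K * fst pa +
      sumR L (fun j => if P j then b j * (if snd pa j then fst pa else 0) else 0))).
  - rewrite sumR_plus, sumR_scal, Hom, sumR_swap. f_equal; [ring|].
    apply sumR_ext. intros j. unfold prob1.
    destruct (P j); [apply sumR_scal | apply sumR_zero].
  - intros pa. rewrite Rmult_plus_distr_l, <- sumR_scal. f_equal; [ring|].
    apply sumR_ext. intros j. destruct (P j), (snd pa j); simpl; ring.
Qed.

Lemma sumR_enum_mi_above_level e n m s : (n <= m)%nat ->
  sumR (enum_mi (S e) m)
    (fun j => if Nat.ltb n (norm1 j) then (/ 3) ^ S e * (/ 4) ^ norm1 j * s else 0)
  = (/ 3) ^ S e * s * (level_tail e n - level_tail e m).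
Proof.
  intros Hnm.
  rewrite (sumR_enum_mi_levels (S e) m
             (fun k => if Nat.ltb n k then (/ 3) ^ S e * (/ 4) ^ k * s else 0)).
  rewrite <- (sumR_levels_above e n m Hnm), <- sumR_scal. apply sumR_ext. intros k.
  destruct (Nat.ltb n k); ring.
Qed.

Lemma sumR_enum_mi_at_level_le e n m s (q : mi -> R) F : (n <= m)%nat -> 0 <= s -> 0 <= F ->
  (forall j, length j = S e -> norm1 j = n -> q j <= F) ->
  sumR (enum_mi (S e) m)
    (fun j => if Nat.eqb (norm1 j) n then (/ 3) ^ S e * (/ 4) ^ norm1 j * s * q j else 0)
  <= (/ 3) ^ S e * s * (3 * level_tail e n) * F.
Proof.
  intros Hnm Hs HF Hq. set (cst := (/ 3) ^ S e * s).
  assert (Hcst : 0 <= cst) by (apply Rmult_le_pos; [apply pow_le; lra | auto]).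
  eapply Rle_trans.
  - apply (sumR_le _ _ (fun j => if Nat.eqb (norm1 j) n then cst * (/ 4) ^ n * F else 0)).
    intros j Hj. apply In_enum_mi in Hj as [Hl _].
    destruct (Nat.eqb_spec (norm1 j) n) as [E|]; [|lra]. rewrite E.
    replace ((/ 3) ^ S e * (/ 4) ^ n * s) with (cst * (/ 4) ^ n) by (unfold cst; ring).
    apply Rmult_le_compat_l; [apply Rmult_le_pos; [auto | apply pow_le; lra] | auto].
  - rewrite (sumR_enum_mi_levels (S e) m (fun k => if Nat.eqb k n then cst * (/ 4) ^ n * F else 0)).
    rewrite (sumR_ext _ _ (fun k =>
        if Nat.eqb k n then level_count (S e) k * (cst * (/ 4) ^ n * F) else 0))
      by (intros k; destruct (Nat.eqb k n); ring).
    rewrite (sumR_seq_indicator (fun k => level_count (S e) k * (cst * (/ 4) ^ n * F)) n m Hnm).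
    pose proof (level_top_le_level_tail e n).
    replace (level_count (S e) n * (cst * (/ 4) ^ n * F))
      with (cst * ((/ 4) ^ n * level_count (S e) n) * F) by ring.
    apply Rmult_le_compat_r; [auto|]. apply Rmult_le_compat_l; auto.
Qed.

Theorem proposition3p2
  (d n : nat) (hd : (1 <= d)%nat) (hn : (1 <= n)%nat)
  (lam kap : R) (hlam : 0 < lam) (hkap0 : 0 < kap) (hkap1 : kap <= 1)
  (nrm : Fun -> R)
  (nrm_tri : forall f g : Fun, nrm (fun x => f x + g x) <= nrm f + nrm g)
  (nrm_hom : forall (c : R) (f : Fun), nrm (fun x => c * f x) = Rabs c * nrm f)
  (u : Fun) (s : R) (hs : 0 <= s)
  (h_conv : forall eps, 0 < eps -> exists M, forall m, (M <= m)%nat ->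
      nrm (fun x => u x - sumR (enum_mi d m) (fun j => hsur (interp u) j x)) < eps)
  (h_bound : forall j : mi, length j = d ->
      nrm (hsur (interp u) j) <= (/ 3) ^ d * (/ 4) ^ norm1 j * s)
  (tn : R) (htn : 0 <= tn) (t : mi -> R)
  (ht : forall i, In i (enum_mi d n) -> norm1 i = n -> 0 <= t i <= tn)
  (om : list (R * (mi -> bool)))
  (om_nonneg : forall pa, In pa om -> 0 <= fst pa)
  (om_sum : sumR om fst = 1)
  (hU_low : forall i, In i (enum_mi d n) -> (norm1 i < n)%nat ->
      forall pa, In pa om -> 0 < fst pa -> snd pa i = false)
  (hU_top : forall i, In i (enum_mi d n) -> norm1 i = n ->
      weibull_G lam kap (t i) (prob1 om i))
  (c : (mi -> bool) -> mi -> R)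
  (hc : forall pa, In pa om -> is_gcp_solution (Iprime d n (snd pa)) (c (snd pa))) :
  sumR om (fun pa =>
      fst pa * nrm (fun x => u x - comb u (Iprime d n (snd pa)) (c (snd pa)) x))
  <= eps_n d n s * (1 + 3 * (1 - exp (- rpow (tn / lam) kap))).
Proof.
  destruct d as [|e]; [lia|].
  set (F := 1 - exp (- rpow (tn / lam) kap)).
  assert (HF : 0 <= F) by (pose proof (exp_opp_le_1 _ (rpow_nonneg (tn / lam) kap)); unfold F; lra).
  assert (Hprob : forall j, length j = S e -> norm1 j = n -> prob1 om j <= F).
  { intros j Hl Hn. assert (Hj : In j (enum_mi (S e) n)) by (apply In_enum_mi; lia).
    exact (weibull_G_le_surv lam kap hlam hkap0 hkap1 _ _ _ (ht j Hj Hn) (hU_top j Hj Hn)). }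
  set (B := fun j => (/ 3) ^ S e * (/ 4) ^ norm1 j * s).
  apply le_epsilon. intros eps Heps.
  destruct (h_conv eps Heps) as [M HM]. set (m := Nat.max M n).
  assert (Hnm : (n <= m)%nat) by lia.
  set (K := eps + sumR (enum_mi (S e) m) (fun j => if Nat.ltb n (norm1 j) then B j else 0)).
  assert (Hout : forall pa, In pa om ->
      fst pa * nrm (fun x => u x - comb u (Iprime (S e) n (snd pa)) (c (snd pa)) x) <=
      fst pa * (K + sumR (enum_mi (S e) m)
                         (fun j => if Nat.eqb (norm1 j) n && snd pa j then B j else 0))).
  { intros pa Hpa. pose proof (om_nonneg pa Hpa).
    destruct (Req_dec (fst pa) 0) as [E|E]; [rewrite E; lra|].
    apply Rmult_le_compat_l; [auto|]. unfold K, B.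
    apply (gcp_error_le_levels nrm nrm_tri nrm_hom); auto; [|apply HM; lia].
    intros i Hi Hin. apply (hU_low i Hi Hin pa Hpa). lra. }
  eapply Rle_trans; [apply sumR_le; exact Hout|].
  rewrite sumR_weighted_indicators by auto. unfold K, B.
  rewrite sumR_enum_mi_above_level by auto.
  pose proof (sumR_enum_mi_at_level_le e n m s (prob1 om) F Hnm hs HF Hprob).
  pose proof (level_tail_nonneg e m). rewrite eps_n_level_tail.
  assert (0 <= (/ 3) ^ S e * s * level_tail e m)
    by (apply Rmult_le_pos; [apply Rmult_le_pos; [apply pow_le|]|]; lra).
  lra.
Qed.
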